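(* Let $(S,\ast)$ and $(T,\ast')$ be adequate commutative partial semigroups, let $h:S\to T$ be a surjective partial semigroup homomorphism, and let $\tilde h:\beta S\to\beta T$ be the continuous extension of $h$, and suppose $\tilde h$ maps $\delta S$ onto $\delta T$. Let $A\subseteq T$ be a set that is not central in $T$, and suppose there is an idempotent $p\in\overline{A}\cap\tilde h(J_\delta(S))$. Then $h^{-1}(A)$ is a $C$-set in $S$ but is not a central set in $S$.
   Context: A partial semigroup is a pair $(S,\ast)$ where $\ast$ is an operation defined on a subset of $S\times S$ such that $(x\ast y)\ast z=x\ast(y\ast z)$ in the sense that if either side is defined, so is the other and they are equal; commutative means $x\ast y=y\ast x$ whenever defined. $\phi_S(s)=\{t: s\ast t\text{ defined}\}$, $\sigma_S(H)=\bigcap_{s\in H}\phi_S(s)$ for $H\in\mathcal{P}_f(S)$; $S$ is adequate if all $\sigma_S(H)\ne\emptyset$. A map $h:S\to T$ is a partial semigroup homomorphism if whenever $y\in\phi_S(x)$, $h(y)\in\phi_T(h(x))$ and $h(x\ast y)=h(x)\ast' h(y)$. $\tilde h(p)=\{B\subseteq T: h^{-1}(B)\in p\}$ for ultrafilters $p\in\beta S$; $\overline{A}=\{p: A\in p\}$. $\delta S=\bigcap_{x\in S}\overline{\phi_S(x)}$, with operation $p\ast q=\{A\subseteq S:\{s: s^{-1}A\in q\}\in p\}$, $s^{-1}A=\{t\in\phi_S(s): s\ast t\in A\}$; it is a compact right topological semigroup with smallest ideal $K(\delta S)$ (similarly for $T$). A set is central if it belongs to some idempotent in $K(\delta S)$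 (resp. $K(\delta T)$). A sequence $\langle y_n\rangle$ in $S$ is adequate if $\prod_{n\in F}y_n$ is defined for every $F\in\mathcal{P}_f(\mathbb{N})$ and for every $K\in\mathcal{P}_f(S)$ there is $m$ with $\prod_{n\in F}y_n\in\sigma_S(K)$ whenever $\min F\ge m$; $\mathcal{T}_S$ is the set of adequate sequences. For $W\in\mathcal{P}_f(S)$, $a\in S$, $W\ast a=\{w\ast a: w\in W,\ w\ast a\text{ defined}\}$. $B$ is a $J_\delta$-set if for every $F\in\mathcal{P}_f(\mathcal{T}_S)$ and $W\in\mathcal{P}_f(S)$ there exist $a\in\sigma_S(W)$, $H\in\mathcal{P}_f(\mathbb{N})$ with $\prod_{t\in H}f(t)\in\sigma_S(W\ast a)$ and $a\ast\prod_{t\in H}f(t)\in B$ for each $f\in F$; $J_\delta(S)=\{p\in\delta S:\text{every member of }p\text{ is a }J_\delta\text{-set}\}$. $A$ is a $C$-set if there exist $\alpha:\mathcal{P}_f(\mathcal{T}_S)\to S$ and $H:\mathcal{P}_f(\mathcal{T}_S)\to\mathcal{P}_f(\mathbb{N})$ such that (1) $F\subsetneq G$ implies $\max H(F)<\min H(G)$, and (2) whenever $G_1\subsetneq\cdots\subsetneq G_m$ in $\mathcal{P}_f(\mathcal{T}_S)$ and $f_i\in G_i$, $\prod_{i=1}^m\big(\alpha(G_i)\ast\prod_{t\in H(G_i)}f_i(t)\big)\in A$. *)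

From Stdlib Require Import List Arith.
Import ListNotations.

Set Implicit Arguments.

Section PartialSemigroups.

Variable S : Type.
Variable op : S -> S -> option S.

Definition psg_assoc : Prop :=
  forall x y z : S,
    match op x y with Some u => op u z | None => None end =
    match op y z with Some v => op x v | None => None end.

Definition psg_comm : Prop := forall x y : S, op x y = op y x.

(** phi_S(s) and sigma_S(H); finite nonempty subsets of S are given by
    nonempty lists (the notions below only depend on the underlying set). *)
Definition phi (s : S) (t : S) : Prop := op s t <> None.

Definition sigma (H : list S) (t : S) : Prop := forall s, In s H -> phi s t.

Definition psg_adequate : Prop :=
  forall H : list S, H <> [] -> exists t, sigma H t.

Fixpoint prodl (l : list S) : option S :=
  match l with
  | [] => None
  | x :: l' => match l' with
               | [] => Some x
               | _ => match prodl l' with Some v => op x v | None => None end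
               end
  end.

Fixpoint prodlo (l : list (option S)) : option S :=
  match l with
  | [] => None
  | o :: l' => match l' with
               | [] => o
               | _ => match o, prodlo l' with
                      | Some a, Some b => op a b
                      | _, _ => None
                      end
               end
  end.

End PartialSemigroups.

(** P_f(N): nonempty finite subsets of N, represented canonically by their
    strictly increasing enumeration. *)
Fixpoint strict_incr (l : list nat) : Prop :=
  match l with
  | [] => True
  | x :: l' => match l' with
               | [] => True
               | y :: _ => x < y /\ strict_incr l'
               end
  end.

Definition PfN (F : list nat) : Prop := F <> [] /\ strict_incr F.
Definition minF (F : list nat) : nat := hd 0 F.
Definition maxF (F : list nat) : nat := last F 0.

Section Sequences.

Variable S : Type.
Variable op : S -> S -> option S.

Definition prodseq (y : nat -> S) (F : list nat) : option S :=
  prodl op (map y F).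

Definition adequate_seq (y : nat -> S) : Prop :=
  (forall F, PfN F -> prodseq y F <> None) /\
  (forall K : list S, K <> [] ->
     exists m, forall F, PfN F -> m <= minF F ->
       exists x, prodseq y F = Some x /\ sigma op K x).

Definition sigma_Wa (W : list S) (a : S) (t : S) : Prop :=
  forall w u, In w W -> op w a = Some u -> phi op u t.

Definition Jdelta_set (B : S -> Prop) : Prop :=
  forall (F : list (nat -> S)) (W : list S),
    F <> [] -> (forall f, In f F -> adequate_seq f) -> W <> [] ->
    exists a H, sigma op W a /\ PfN H /\
      forall f, In f F ->
        exists x, prodseq f H = Some x /\ sigma_Wa W a x /\
          exists y, op a x = Some y /\ B y.

Definition PfT (F : (nat -> S) -> Prop) : Prop :=
  (exists l : list (nat -> S), l <> [] /\ forall f, F f <-> In f l) /\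
  (forall f, F f -> adequate_seq f).

Definition strict_sub {X : Type} (F G : X -> Prop) : Prop :=
  (forall x, F x -> G x) /\ exists x, G x /\ ~ F x.

Fixpoint chainPfT (Gs : list ((nat -> S) -> Prop)) : Prop :=
  match Gs with
  | [] => True
  | G :: Gs' => PfT G /\
      match Gs' with
      | [] => True
      | G' :: _ => strict_sub G G' /\ chainPfT Gs'
      end
  end.

Definition C_set (A : S -> Prop) : Prop :=
  exists (alpha : ((nat -> S) -> Prop) -> S)
         (H : ((nat -> S) -> Prop) -> list nat),
    (forall F, PfT F -> PfN (H F)) /\
    (forall F G, PfT F -> PfT G -> strict_sub F G -> maxF (H F) < minF (H G)) /\
    (forall (GF : list (((nat -> S) -> Prop) * (nat -> S))),
       GF <> [] -> chainPfT (map fst GF) ->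
       (forall Gf, In Gf GF -> (fst Gf) (snd Gf)) ->
       exists x,
         prodlo op (map (fun Gf =>
                          match prodseq (snd Gf) (H (fst Gf)) with
                          | Some v => op (alpha (fst Gf)) v
                          | None => None
                          end) GF) = Some x
         /\ A x).

Definition ultrafilter (p : (S -> Prop) -> Prop) : Prop :=
  ~ p (fun _ => False) /\
  p (fun _ => True) /\
  (forall A B : S -> Prop, p A -> (forall x, A x -> B x) -> p B) /\
  (forall A B : S -> Prop, p A -> p B -> p (fun x => A x /\ B x)) /\
  (forall A : S -> Prop, p A \/ p (fun x => ~ A x)).

Definition deltaS (p : (S -> Prop) -> Prop) : Prop :=
  ultrafilter p /\ forall x, p (phi op x).

Definition sinv (s : S) (A : S -> Prop) (t : S) : Prop :=
  exists u, op s t = Some u /\ A u.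

Definition ufmul (p q : (S -> Prop) -> Prop) : (S -> Prop) -> Prop :=
  fun A => p (fun s => q (sinv s A)).

Definition ufeq (p q : (S -> Prop) -> Prop) : Prop := forall A, p A <-> q A.

Definition ideal_delta (I : ((S -> Prop) -> Prop) -> Prop) : Prop :=
  (exists p, I p) /\
  (forall p, I p -> deltaS p) /\
  (forall p p', I p -> ufeq p p' -> I p') /\
  (forall p q, I p -> deltaS q -> I (ufmul p q) /\ I (ufmul q p)).

Definition in_K_delta (p : (S -> Prop) -> Prop) : Prop :=
  forall I, ideal_delta I -> I p.

Definition idempotent (p : (S -> Prop) -> Prop) : Prop := ufeq (ufmul p p) p.

Definition central (A : S -> Prop) : Prop :=
  exists p, deltaS p /\ in_K_delta p /\ idempotent p /\ p A.

Definition in_Jdelta (p : (S -> Prop) -> Prop) : Prop :=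
  deltaS p /\ forall B, p B -> Jdelta_set B.

End Sequences.

Definition psg_hom {S T : Type} (opS : S -> S -> option S)
  (opT : T -> T -> option T) (h : S -> T) : Prop :=
  forall x y z, opS x y = Some z -> opT (h x) (h y) = Some (h z).

Definition ext {S T : Type} (h : S -> T) (p : (S -> Prop) -> Prop)
  : (T -> Prop) -> Prop :=
  fun B => p (fun s => B (h s)).

From Stdlib Require Import List Lia Classical ClassicalEpsilon
  FunctionalExtensionality PropExtensionality.
Import ListNotations.

(* The extension h~ restricted to delta S is a homomorphism onto delta T, so it maps
   the smallest ideal K(delta S) into K(delta T) and idempotents to idempotents;
   hence h^-1(A) central would make A central.

   For the C-set property write p = h~(r) with r in J_delta(S), and let
   A* = {t in A : t^-1 A in p}; idempotence of p gives A* in p and t^-1 A* in p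
   for t in A*.  Define alpha(F), H(F) by recursion on F in P_f(T_S) ordered by
   strict inclusion.  The products along chains whose members lie strictly below F
   take finitely many values W, so A* /\ (h w)^-1 A* (w in W) lies in p, its
   h-preimage lies in r and is a J_delta-set; applied to the sequences of F (shifted
   beyond every earlier H(G)) and to W it yields alpha(F), H(F) such that every chain
   ending at F has its product in the h-preimage of A*. *)

Lemma pred_ext {X} (P Q : X -> Prop) : (forall x, P x <-> Q x) -> P = Q.
Proof.
  intro HPQ. apply functional_extensionality. intro x.
  apply propositional_extensionality, HPQ.
Qed.

Lemma strict_sub_irrefl {X} (G : X -> Prop) : ~ strict_sub G G.
Proof. intros [_ [x [Gx nGx]]]. exact (nGx Gx). Qed.

Lemma strict_sub_trans {X} (F G K : X -> Prop) :
  strict_sub F G -> strict_sub G K -> strict_sub F K.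
Proof.
  intros [HFG _] [HGK [x [Kx nGx]]]. split; [auto|].
  exists x. split; [exact Kx|]. intro Fx. exact (nGx (HFG x Fx)).
Qed.

Definition finite {X} (F : X -> Prop) : Prop := exists l, forall x, F x <-> In x l.

Definition restrict {X} (G : X -> Prop) (l : list X) : list X :=
  filter (fun x => if excluded_middle_informative (G x) then true else false) l.

Lemma in_restrict {X} (G : X -> Prop) l x : In x (restrict G l) <-> In x l /\ G x.
Proof.
  unfold restrict. rewrite filter_In.
  destruct (excluded_middle_informative (G x)); intuition congruence.
Qed.

Lemma restrict_length_lt {X} (G : X -> Prop) l x :
  In x l -> ~ G x -> length (restrict G l) < length l.
Proof.
  induction l as [|y l IH]; simpl; [tauto|]. intros Hx nGx.
  unfold restrict; simpl. fold (restrict G l).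
  destruct (excluded_middle_informative (G y)) as [Gy|_]; simpl.
  - destruct Hx as [<-|Hx]; [contradiction|]. specialize (IH Hx nGx). lia.
  - pose proof (filter_length_le
      (fun x => if excluded_middle_informative (G x) then true else false) l).
    unfold restrict. lia.
Qed.

Lemma strict_sub_finite_wf {X} :
  well_founded (fun G F : X -> Prop => strict_sub G F /\ finite F).
Proof.
  assert (Hacc : forall n (F : X -> Prop) l, length l <= n ->
            (forall x, F x <-> In x l) ->
            Acc (fun G F : X -> Prop => strict_sub G F /\ finite F) F).
  { induction n as [|n IH]; intros F l Hlen Hl; constructor;
      intros G [[HGF [x [Fx nGx]]] _];
      pose proof (restrict_length_lt G l x (proj1 (Hl x) Fx) nGx); [lia|].
    apply (IH G (restrict G l)); [lia|].
    intro y. rewrite in_restrict. specialize (HGF y). specialize (Hl y). tauto. }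
  intro F. constructor. intros G [HGF [l Hl]].
  apply (Acc_inv (Hacc _ F l (le_n _) Hl)). split; [exact HGF|exists l; exact Hl].
Qed.

Fixpoint sublists {X} (l : list X) : list (list X) :=
  match l with
  | [] => [[]]
  | x :: l' => map (cons x) (sublists l') ++ sublists l'
  end.

Lemma filter_in_sublists {X} (b : X -> bool) l : In (filter b l) (sublists l).
Proof.
  induction l as [|x l IH]; simpl; [left; reflexivity|].
  apply in_or_app. destruct (b x); [left; apply in_map|right]; exact IH.
Qed.

Definition subsets {X} (l : list X) : list (X -> Prop) :=
  map (fun l' x => In x l') (sublists l).

Lemma in_subsets {X} (F G : X -> Prop) l :
  (forall x, F x <-> In x l) -> (forall x, G x -> F x) -> In G (subsets l).
Proof.
  intros Hl HGF. replace G with (fun x => In x (restrict G l)).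
  - apply (in_map (fun l' x => In x l')), filter_in_sublists.
  - apply pred_ext. intro x. rewrite in_restrict.
    specialize (Hl x). specialize (HGF x). tauto.
Qed.

Lemma subsets_bounded {X} (u : (X -> Prop) -> nat) (F : X -> Prop) :
  finite F -> exists m, forall G, (forall x, G x -> F x) -> u G < m.
Proof.
  intros [l Hl]. exists (S (list_max (map u (subsets l)))). intros G HGF.
  assert (Hmax : Forall (fun k => k <= list_max (map u (subsets l))) (map u (subsets l)))
    by (apply list_max_le; reflexivity).
  rewrite Forall_forall in Hmax.
  specialize (Hmax (u G) (in_map u _ G (in_subsets F G l Hl HGF))). lia.
Qed.

Fixpoint lists_upto {X} (n : nat) (alph : list X) : list (list X) :=
  match n with
  | 0 => [[]]
  | S n => [] :: flat_map (fun x => map (cons x) (lists_upto n alph)) alph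
  end.

Lemma in_lists_upto {X} n (alph c : list X) :
  incl c alph -> length c <= n -> In c (lists_upto n alph).
Proof.
  revert c. induction n as [|n IH]; intros [|x c] Hc Hlen; simpl in *;
    try lia; auto.
  right. apply in_flat_map. exists x. split; [apply Hc; left; reflexivity|].
  apply in_map, IH; [intros y Hy; apply Hc; right; exact Hy|lia].
Qed.

(** * Recursion along a well-founded relation with choices *)

Section WellFoundedChoice.

Context {X V : Type} (R : X -> X -> Prop) (v0 : V) (Good : (X -> V) -> X -> Prop).
Hypothesis R_wf : well_founded R.

Definition fits (x : X) (g : X -> V) (v : V) : Prop :=
  forall g', g' x = v -> (forall y, R y x -> g' y = g y) -> Good g' x.

(* The value at x is required to work for every function agreeing with g below x,
   so the choice made during the recursion stays valid for the final function. *)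
Hypothesis extend : forall g x, (forall y, R y x -> Good g y) -> exists v, fits x g v.

Definition below (x : X) (rec : forall y, R y x -> V) (y : X) : V :=
  match excluded_middle_informative (R y x) with
  | left Ryx => rec y Ryx
  | right _ => v0
  end.

Definition wf_choice : X -> V :=
  Fix R_wf (fun _ => V) (fun x rec => epsilon (inhabits v0) (fits x (below x rec))).

Lemma wf_choice_eq x :
  wf_choice x = epsilon (inhabits v0) (fits x (below x (fun y _ => wf_choice y))).
Proof.
  apply (Fix_eq R_wf (fun _ => V)). intros x' f f' Hff'.
  replace f' with f; [reflexivity|].
  apply functional_extensionality_dep. intro y.
  apply functional_extensionality_dep. intro Ryx. apply Hff'.
Qed.

Lemma wf_choice_good : forall x, Good wf_choice x.
Proof.
  apply (well_founded_ind R_wf). intros x IH.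
  assert (Hbelow : forall y, R y x -> below x (fun y _ => wf_choice y) y = wf_choice y).
  { intros y Ryx. unfold below.
    destruct (excluded_middle_informative (R y x)); [reflexivity|contradiction]. }
  assert (Hfits : fits x (below x (fun y _ => wf_choice y)) (wf_choice x)).
  { rewrite (wf_choice_eq x). apply epsilon_spec.
    destruct (extend wf_choice x IH) as [v Hv]. exists v.
    intros g' Hx Hg'. apply Hv; [exact Hx|].
    intros y Ryx. rewrite Hg' by exact Ryx. apply Hbelow, Ryx. }
  apply Hfits; [reflexivity|]. intros y Ryx. symmetry. apply Hbelow, Ryx.
Qed.

Lemma wf_recursive_choice : exists g : X -> V, forall x, Good g x.
Proof. exists wf_choice. exact wf_choice_good. Qed.

End WellFoundedChoice.

Section Ultrafilter.

Context {X : Type} (q : (X -> Prop) -> Prop).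
Hypothesis q_uf : ultrafilter q.

Lemma uf_mono (P Q : X -> Prop) : q P -> (forall x, P x -> Q x) -> q Q.
Proof. destruct q_uf as (_ & _ & Hmono & _). apply Hmono. Qed.

Lemma uf_and (P Q : X -> Prop) : q P -> q Q -> q (fun x => P x /\ Q x).
Proof. destruct q_uf as (_ & _ & _ & Hand & _). apply Hand. Qed.

Lemma uf_true : q (fun _ => True).
Proof. destruct q_uf as (_ & Htrue & _). exact Htrue. Qed.

Lemma uf_proper : ~ q (fun _ => False).
Proof. destruct q_uf as (Hfalse & _). exact Hfalse. Qed.

Lemma uf_compl (P : X -> Prop) : q P \/ q (fun x => ~ P x).
Proof. destruct q_uf as (_ & _ & _ & _ & Hcompl). apply Hcompl. Qed.

Lemma uf_forall_in {Y} (K : list Y) (P : Y -> X -> Prop) :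
  (forall k, In k K -> q (P k)) -> q (fun x => forall k, In k K -> P k x).
Proof.
  induction K as [|k K IH]; intros HK.
  - apply uf_mono with (1 := uf_true). intros x _ k [].
  - apply uf_mono with (1 := uf_and _ _ (HK k (or_introl eq_refl))
                                         (IH (fun k' Hk' => HK k' (or_intror Hk')))).
    intros x [Hk HK'] k' [<-|Hk']; auto.
Qed.

Lemma uf_inhabited : inhabited X.
Proof.
  destruct (classic (inhabited X)) as [Hinh|Hempty]; [exact Hinh|].
  exfalso. apply uf_proper.
  apply uf_mono with (1 := uf_true). intros x _. apply Hempty. constructor. exact x.
Qed.

End Ultrafilter.

Section Idempotent.

Context {T : Type} (op : T -> T -> option T) (p : (T -> Prop) -> Prop) (A : T -> Prop).
Hypotheses (assoc : psg_assoc op) (p_uf : ultrafilter p) (p_idem : idempotent op p).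

Definition star (t : T) : Prop := A t /\ p (sinv op t A).

Lemma star_mem : p A -> p star.
Proof. intro pA. exact (uf_and p p_uf _ _ pA (proj2 (p_idem A) pA)). Qed.

Lemma star_sinv_mem t : star t -> p (sinv op t star).
Proof.
  intros [_ Ht].
  apply uf_mono with (1 := p_uf) (2 := uf_and p p_uf _ _ Ht (proj2 (p_idem _) Ht)).
  intros u [[w [Hw Aw]] Hu]. exists w. split; [exact Hw|]. split; [exact Aw|].
  apply uf_mono with (1 := p_uf) (2 := Hu).
  intros v [v' [Hv' [w' [Hw' Aw']]]]. exists w'. split; [|exact Aw'].
  pose proof (assoc t u v) as Htuv. rewrite Hw, Hv' in Htuv. congruence.
Qed.

Definition star_inter (K : list T) (t : T) : Prop :=
  star t /\ forall u, In u K -> star u -> sinv op u star t.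

Lemma star_inter_mem K : p A -> p (star_inter K).
Proof.
  intro pA. unfold star_inter. apply (uf_and p p_uf _ _ (star_mem pA)).
  apply (uf_forall_in p p_uf). intros u _.
  destruct (classic (star u)) as [Su|nSu].
  - apply uf_mono with (1 := p_uf) (2 := star_sinv_mem u Su). auto.
  - apply uf_mono with (1 := p_uf) (2 := uf_true p p_uf). intros t _ Su. contradiction.
Qed.

End Idempotent.

Section PartialSemigroup.

Context {S : Type} (op : S -> S -> option S).
Hypothesis assoc : psg_assoc op.

Definition omul (a b : option S) : option S :=
  match a, b with
  | Some x, Some y => op x y
  | _, _ => None
  end.

Lemma omul_assoc a b c : omul a (omul b c) = omul (omul a b) c.
Proof.
  destruct a as [x|], b as [y|], c as [z|]; simpl; try reflexivity.
  - pose proof (assoc x y z) as Hxyz.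
    destruct (op x y), (op y z); simpl in *; congruence.
  - destruct (op x y); reflexivity.
Qed.

Lemma prodlo_cons o l : l <> [] -> prodlo op (o :: l) = omul o (prodlo op l).
Proof. destruct l; [congruence|reflexivity]. Qed.

Lemma prodlo_snoc l o : l <> [] -> prodlo op (l ++ [o]) = omul (prodlo op l) o.
Proof.
  induction l as [|x l IH]; [congruence|]. intros _.
  destruct l as [|y l]; [reflexivity|].
  change ((x :: y :: l) ++ [o]) with (x :: ((y :: l) ++ [o])).
  rewrite prodlo_cons by (destruct l; discriminate).
  rewrite IH, omul_assoc by discriminate.
  rewrite (prodlo_cons x (y :: l)) by discriminate. reflexivity.
Qed.

Lemma op_defined_sigma_Wa W w a x y :
  In w W -> sigma op W a -> sigma_Wa op W a x -> op a x = Some y ->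
  exists u, op w y = Some u.
Proof.
  intros Hw Ha Hx Hy. specialize (Ha w Hw). unfold phi in Ha.
  destruct (op w a) as [wa|] eqn:Hwa; [|congruence].
  specialize (Hx w wa Hw Hwa). unfold phi in Hx.
  destruct (op wa x) as [u|] eqn:Hwax; [|congruence].
  exists u. pose proof (assoc w a x) as Hwa_x. rewrite Hwa, Hy, Hwax in Hwa_x.
  congruence.
Qed.

End PartialSemigroup.

Lemma strict_incr_shift m F : strict_incr F -> strict_incr (map (fun n => n + m) F).
Proof.
  induction F as [|x F IH]; simpl; [tauto|]. destruct F as [|y F]; simpl; [tauto|].
  intros [Hxy HF]. split; [lia|]. apply IH, HF.
Qed.

Lemma PfN_shift m F : PfN F -> PfN (map (fun n => n + m) F).
Proof.
  intros [Hne Hincr]. split; [|apply strict_incr_shift, Hincr].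
  destruct F; [contradiction|discriminate].
Qed.

Lemma minF_shift m F : F <> [] -> minF (map (fun n => n + m) F) = minF F + m.
Proof. destruct F; [contradiction|reflexivity]. Qed.

Section Shift.

Context {S : Type} (op : S -> S -> option S).

Definition shift (m : nat) (f : nat -> S) : nat -> S := fun n => f (n + m).

Lemma prodseq_shift m f H :
  prodseq op (shift m f) H = prodseq op f (map (fun n => n + m) H).
Proof. unfold prodseq, shift. rewrite map_map. reflexivity. Qed.

Lemma adequate_shift m f : adequate_seq op f -> adequate_seq op (shift m f).
Proof.
  intros [Hdef Hsigma]. split.
  - intros F HF. rewrite prodseq_shift. apply Hdef, PfN_shift, HF.
  - intros K HK. destruct (Hsigma K HK) as [m0 Hm0]. exists m0. intros F HF Hmin.
    rewrite prodseq_shift. apply Hm0; [apply PfN_shift, HF|].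
    rewrite minF_shift by apply HF. lia.
Qed.

Lemma Jdelta_set_shift (B : S -> Prop) (m : nat) :
  Jdelta_set op B ->
  forall (l : list (nat -> S)) (W : list S),
    l <> [] -> (forall f, In f l -> adequate_seq op f) -> W <> [] ->
    exists a H, sigma op W a /\ PfN H /\ m <= minF H /\
      forall f, In f l ->
        exists x, prodseq op f H = Some x /\ sigma_Wa op W a x /\
          exists y, op a x = Some y /\ B y.
Proof.
  intros HB l W Hl Hadeq HW.
  destruct (HB (map (shift m) l) W) as [a [H [Ha [HH Hseq]]]].
  - destruct l; [contradiction|discriminate].
  - intros f Hf. apply in_map_iff in Hf. destruct Hf as [f0 [<- Hf0]].
    apply adequate_shift, Hadeq, Hf0.
  - exact HW.
  - exists a, (map (fun n => n + m) H). split; [exact Ha|]. split; [apply PfN_shift, HH|].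
    split; [rewrite minF_shift by apply HH; lia|].
    intros f Hf. rewrite <- prodseq_shift. apply Hseq, in_map, Hf.
Qed.

End Shift.

Section Chains.

Context {S : Type} (op : S -> S -> option S).
Local Notation seqset := ((nat -> S) -> Prop).

Lemma chain_cons_inv (G : seqset) Gs :
  chainPfT op (G :: Gs) -> PfT op G /\ chainPfT op Gs.
Proof. destruct Gs; simpl; tauto. Qed.

Lemma chain_head_below (G : seqset) Gs :
  chainPfT op (G :: Gs) -> forall G', In G' Gs -> strict_sub G G'.
Proof.
  revert G. induction Gs as [|G1 Gs IH]; intros G Hc G' HG'; [destruct HG'|].
  destruct Hc as [_ [HGG1 Hc]]. destruct HG' as [<-|HG']; [exact HGG1|].
  apply strict_sub_trans with G1; [exact HGG1|apply IH; assumption].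
Qed.

Lemma chain_app_inv (Gs1 Gs2 : list seqset) :
  chainPfT op (Gs1 ++ Gs2) ->
  chainPfT op Gs1 /\ forall G G', In G Gs1 -> In G' Gs2 -> strict_sub G G'.
Proof.
  induction Gs1 as [|G Gs1 IH]; intro Hc; [split; [exact I|intros ? ? []]|].
  destruct (chain_cons_inv _ _ Hc) as [HG Hc']. destruct (IH Hc') as [Hc1 Hbelow].
  split.
  - destruct Gs1 as [|G1 Gs1]; [split; [exact HG|exact I]|].
    split; [exact HG|split; [|exact Hc1]].
    apply (chain_head_below _ _ Hc). left. reflexivity.
  - intros G0 G' [<-|HG0] HG'; [|apply Hbelow; assumption].
    apply (chain_head_below _ _ Hc), in_or_app. right. exact HG'.
Qed.

Lemma chain_PfT (Gs : list seqset) G : chainPfT op Gs -> In G Gs -> PfT op G.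
Proof.
  induction Gs as [|G0 Gs IH]; intros Hc HG; [destruct HG|].
  destruct (chain_cons_inv _ _ Hc) as [HG0 Hc'].
  destruct HG as [<-|HG]; [exact HG0|exact (IH Hc' HG)].
Qed.

Lemma chain_NoDup (Gs : list seqset) : chainPfT op Gs -> NoDup Gs.
Proof.
  induction Gs as [|G Gs IH]; intro Hc; constructor.
  - intro HG. exact (strict_sub_irrefl G (chain_head_below G Gs Hc G HG)).
  - apply IH, (chain_cons_inv _ _ Hc).
Qed.

Definition is_chain (c : list (seqset * (nat -> S))) : Prop :=
  chainPfT op (map fst c) /\ forall Gf, In Gf c -> fst Gf (snd Gf).

Lemma is_chain_snoc_inv c F f :
  is_chain (c ++ [(F, f)]) ->
  is_chain c /\ (forall Gf, In Gf c -> strict_sub (fst Gf) F) /\ PfT op F /\ F f.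
Proof.
  intros [Hc Hmem]. rewrite map_app in Hc.
  destruct (chain_app_inv _ _ Hc) as [Hc' Hbelow]. split; [|split; [|split]].
  - split; [exact Hc'|]. intros Gf HGf. apply Hmem, in_or_app. left. exact HGf.
  - intros Gf HGf. apply Hbelow; [apply in_map, HGf|left; reflexivity].
  - apply (chain_PfT _ F Hc), in_or_app. right. left. reflexivity.
  - apply (Hmem (F, f)), in_or_app. right. left. reflexivity.
Qed.

(* A chain inside F is a duplicate-free list of subsets of F, so it is no longer
   than the list of all subsets of F. *)
Lemma chains_within_listed (F : seqset) :
  finite F -> exists L, forall c, is_chain c ->
    (forall Gf, In Gf c -> forall f, fst Gf f -> F f) -> In c L.
Proof.
  intros [l Hl].
  exists (lists_upto (length (subsets l)) (list_prod (subsets l) l)).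
  intros c [Hc Hmem] Hsub. apply in_lists_upto.
  - intros [G f] HGf. apply in_prod.
    + exact (in_subsets F G l Hl (Hsub _ HGf)).
    + apply Hl, (Hsub _ HGf), (Hmem _ HGf).
  - rewrite <- (length_map fst c). apply NoDup_incl_length; [exact (chain_NoDup _ Hc)|].
    intros G HG. apply in_map_iff in HG. destruct HG as [[G' f] [<- HGf]].
    exact (in_subsets F G' l Hl (Hsub _ HGf)).
Qed.

End Chains.

(** * The C-set property *)

Section CSet.

Context {S T : Type} (opS : S -> S -> option S) (opT : T -> T -> option T) (h : S -> T)
  (p : (T -> Prop) -> Prop) (A : T -> Prop) (r : (S -> Prop) -> Prop).
Hypotheses (assocS : psg_assoc opS) (assocT : psg_assoc opT) (hom : psg_hom opS opT h)
  (p_uf : ultrafilter p) (p_idem : idempotent opT p) (pA : p A)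
  (r_J : in_Jdelta opS r) (p_r : ufeq p (ext h r)).

Local Notation seqset := ((nat -> S) -> Prop).
Local Notation star := (star opT p A).
Local Notation star_inter := (star_inter opT p A).

Definition chain_factor (g : seqset -> S * list nat) (Gf : seqset * (nat -> S)) : option S :=
  match prodseq opS (snd Gf) (snd (g (fst Gf))) with
  | Some v => opS (fst (g (fst Gf))) v
  | None => None
  end.

Definition chain_prod (g : seqset -> S * list nat) (c : list (seqset * (nat -> S))) :=
  prodlo opS (map (chain_factor g) c).

Lemma chain_prod_agree g g' c :
  (forall Gf, In Gf c -> g' (fst Gf) = g (fst Gf)) -> chain_prod g' c = chain_prod g c.
Proof.
  intro Hagree. unfold chain_prod. f_equal. apply map_ext_in.
  intros Gf HGf. unfold chain_factor. rewrite (Hagree Gf HGf). reflexivity.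
Qed.

Lemma chain_prod_snoc g c Gf :
  c <> [] -> chain_prod g (c ++ [Gf]) = omul opS (chain_prod g c) (chain_factor g Gf).
Proof.
  intro Hc. unfold chain_prod. rewrite map_app. apply (prodlo_snoc opS assocS).
  destruct c; [contradiction|discriminate].
Qed.

Definition valid_at (g : seqset -> S * list nat) (F : seqset) : Prop :=
  PfT opS F ->
  PfN (snd (g F)) /\
  (forall G, strict_sub G F -> maxF (snd (g G)) < minF (snd (g F))) /\
  (forall c f, is_chain opS (c ++ [(F, f)]) ->
     exists x, chain_prod g (c ++ [(F, f)]) = Some x /\ star (h x)).

Lemma star_step W k a x y :
  In k W -> star (h k) -> sigma opS W a -> sigma_Wa opS W a x -> opS a x = Some y ->
  star_inter (map h W) (h y) -> exists w, opS k y = Some w /\ star (h w).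
Proof.
  intros HkW Sk Ha Hx Hy [_ Hky].
  destruct (op_defined_sigma_Wa opS assocS W k a x y HkW Ha Hx Hy) as [w Hw].
  exists w. split; [exact Hw|].
  destruct (Hky (h k) (in_map h W k HkW) Sk) as [u [Hu Su]].
  rewrite (hom _ _ _ Hw) in Hu. injection Hu as <-. exact Su.
Qed.

Lemma chain_values_listed g (F : seqset) :
  finite F -> exists W, W <> [] /\ forall c k, is_chain opS c ->
    (forall Gf, In Gf c -> strict_sub (fst Gf) F) -> chain_prod g c = Some k -> In k W.
Proof.
  intro Hfin. destruct (chains_within_listed opS F Hfin) as [L HL].
  destruct (uf_inhabited r (proj1 (proj1 r_J))) as [s0].
  exists (s0 :: map (fun c => match chain_prod g c with Some k => k | None => s0 end) L).
  split; [discriminate|]. intros c k Hc Hbelow Hk.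
  right. apply in_map_iff. exists c. rewrite Hk. split; [reflexivity|].
  apply HL; [exact Hc|]. intros Gf HGf. apply (Hbelow Gf HGf).
Qed.

Lemma valid_extend g (F : seqset) :
  (forall G, strict_sub G F /\ finite F -> valid_at g G) ->
  exists v, forall g', g' F = v -> (forall G, strict_sub G F /\ finite F -> g' G = g G) ->
    valid_at g' F.
Proof.
  intros Hbelow. destruct (classic (PfT opS F)) as [[[l [Hl_ne Hl]] Hadeq]|nF];
    [|exists (g F); intros g' _ _ HF; contradiction].
  assert (Hfin : finite F) by (exists l; exact Hl).
  destruct (subsets_bounded (fun G => maxF (snd (g G))) F Hfin) as [m Hm].
  destruct (chain_values_listed g F Hfin) as [W [HW_ne HW]].
  assert (HB : r (fun s => star_inter (map h W) (h s)))
    by exact (proj1 (p_r _) (star_inter_mem opT p A assocT p_uf p_idem _ pA)).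
  destruct (Jdelta_set_shift opS _ m (proj2 r_J _ HB) l W Hl_ne
              (fun f Hf => Hadeq f (proj2 (Hl f) Hf)) HW_ne)
    as [a [H [Ha [HH [HmH Hseq]]]]].
  exists (a, H). intros g' Hg'F Hg'below _. rewrite Hg'F. split; [exact HH|split].
  - intros G HGF. rewrite Hg'below by (split; assumption).
    specialize (Hm G (proj1 HGF)). simpl. lia.
  - intros c f Hc. destruct (is_chain_snoc_inv opS c F f Hc) as [Hc' [Hc'F [_ Ff]]].
    destruct (Hseq f (proj1 (Hl f) Ff)) as [x [Hx [HxW [y [Hy Sy]]]]].
    assert (Hfactor : chain_factor g' (F, f) = Some y)
      by (unfold chain_factor; simpl; rewrite Hg'F; simpl; rewrite Hx; exact Hy).
    destruct (classic (c = [])) as [->|Hne]; [exists y; split; [exact Hfactor|apply Sy]|].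
    destruct (exists_last Hne) as [c0 [[G g0] ->]].
    destruct (is_chain_snoc_inv opS c0 G g0 Hc') as [_ [_ [HG _]]].
    assert (HGF : strict_sub G F)
      by (apply (Hc'F (G, g0)), in_or_app; right; left; reflexivity).
    destruct (Hbelow G (conj HGF Hfin) HG) as [_ [_ Hval]].
    destruct (Hval c0 g0 Hc') as [k [Hk Sk]].
    destruct (star_step W k a x y (HW _ k Hc' Hc'F Hk) Sk Ha HxW Hy Sy) as [w [Hw Sw]].
    exists w. split; [|exact Sw].
    rewrite chain_prod_snoc by (destruct c0; discriminate).
    rewrite (chain_prod_agree g g'), Hk, Hfactor; [exact Hw|].
    intros Gf HGf. apply Hg'below. split; [exact (Hc'F Gf HGf)|exact Hfin].
Qed.

Lemma preimage_C_set : C_set opS (fun s => A (h s)).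
Proof.
  destruct (uf_inhabited r (proj1 (proj1 r_J))) as [s0].
  destruct (wf_recursive_choice _ (s0, []) valid_at strict_sub_finite_wf valid_extend)
    as [g Hg].
  exists (fun G => fst (g G)), (fun G => snd (g G)). split; [|split].
  - intros F HF. exact (proj1 (Hg F HF)).
  - intros F G _ HG HFG. exact (proj1 (proj2 (Hg G HG)) F HFG).
  - intros c Hne Hchain Hmem.
    destruct (exists_last Hne) as [c0 [[F f] ->]].
    assert (Hc : is_chain opS (c0 ++ [(F, f)])) by (split; assumption).
    destruct (is_chain_snoc_inv opS _ _ _ Hc) as [_ [_ [HF _]]].
    destruct (proj2 (proj2 (Hg F HF)) c0 f Hc) as [x [Hx Sx]].
    exists x. split; [exact Hx|exact (proj1 Sx)].
Qed.

End CSet.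

(** * The smallest ideal *)

Section DeltaProduct.

Context {S : Type} (op : S -> S -> option S).
Hypothesis assoc : psg_assoc op.

Lemma sinv_compl q s X :
  deltaS op q -> ~ q (sinv op s X) -> q (sinv op s (fun u => ~ X u)).
Proof.
  intros [q_uf q_phi] nX.
  destruct (uf_compl q q_uf (sinv op s X)) as [HX|HnX]; [contradiction|].
  apply uf_mono with (1 := q_uf) (2 := uf_and q q_uf _ _ HnX (q_phi s)).
  intros t [Hnt Hst]. unfold phi in Hst. destruct (op s t) as [u|] eqn:Hu; [|congruence].
  exists u. split; [exact Hu|]. intro Xu. apply Hnt. exists u. split; assumption.
Qed.

Lemma ufmul_ultrafilter r q : ultrafilter r -> deltaS op q -> ultrafilter (ufmul op r q).
Proof.
  intros r_uf q_delta. pose proof q_delta as [q_uf q_phi]. unfold ufmul.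
  split; [|split; [|split; [|split]]].
  - intro Hfalse. apply (uf_proper r r_uf).
    apply uf_mono with (1 := r_uf) (2 := Hfalse). intros s Hs.
    apply (uf_proper q q_uf), uf_mono with (1 := q_uf) (2 := Hs). intros t [u [_ []]].
  - apply uf_mono with (1 := r_uf) (2 := uf_true r r_uf). intros s _.
    apply uf_mono with (1 := q_uf) (2 := q_phi s). intros t Hst.
    unfold phi in Hst. destruct (op s t) as [u|] eqn:Hu; [|congruence].
    exists u. split; [exact Hu|exact I].
  - intros X Y HX HXY. apply uf_mono with (1 := r_uf) (2 := HX). intros s Hs.
    apply uf_mono with (1 := q_uf) (2 := Hs). intros t [u [Hu Xu]]. exists u. auto.
  - intros X Y HX HY. apply uf_mono with (1 := r_uf) (2 := uf_and r r_uf _ _ HX HY).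
    intros s [HXs HYs]. apply uf_mono with (1 := q_uf) (2 := uf_and q q_uf _ _ HXs HYs).
    intros t [[u [Hu Xu]] [u' [Hu' Yu']]]. exists u. split; [exact Hu|].
    split; [exact Xu|congruence].
  - intro X.
    destruct (uf_compl r r_uf (fun s => q (sinv op s X))) as [HX|HnX]; [left; exact HX|right].
    apply uf_mono with (1 := r_uf) (2 := HnX). intros s Hs.
    exact (sinv_compl q s X q_delta Hs).
Qed.

Lemma ufmul_deltaS r q : deltaS op r -> deltaS op q -> deltaS op (ufmul op r q).
Proof.
  intros [r_uf r_phi] q_delta. split; [exact (ufmul_ultrafilter r q r_uf q_delta)|].
  pose proof q_delta as [q_uf q_phi].
  intro x. apply uf_mono with (1 := r_uf) (2 := r_phi x). intros s Hxs.
  unfold phi in Hxs. destruct (op x s) as [xs|] eqn:Hxs'; [|congruence].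
  apply uf_mono with (1 := q_uf) (2 := uf_and q q_uf _ _ (q_phi s) (q_phi xs)).
  intros t [Hst Hxst]. unfold phi in Hst, Hxst.
  destruct (op s t) as [u|] eqn:Hu; [|congruence]. exists u. split; [exact Hu|].
  unfold phi. pose proof (assoc x s t) as Hxs_t. rewrite Hxs', Hu in Hxs_t. congruence.
Qed.

End DeltaProduct.

Section Image.

Context {S T : Type} (opS : S -> S -> option S) (opT : T -> T -> option T) (h : S -> T).
Hypotheses (assocS : psg_assoc opS) (hom : psg_hom opS opT h).
Hypothesis ext_deltaS : forall r, deltaS opS r -> deltaS opT (ext h r).
Hypothesis ext_onto : forall q, deltaS opT q -> exists r, deltaS opS r /\ ufeq (ext h r) q.

Lemma ext_ufmul r q :
  deltaS opS q -> ext h (ufmul opS r q) = ufmul opT (ext h r) (ext h q).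
Proof.
  intros [q_uf q_phi]. apply functional_extensionality. intro B. unfold ufmul, ext.
  f_equal. apply pred_ext. intro s. split; intro Hs.
  - apply uf_mono with (1 := q_uf) (2 := Hs). intros t [u [Hu Bu]].
    exists (h u). split; [exact (hom _ _ _ Hu)|exact Bu].
  - apply uf_mono with (1 := q_uf) (2 := uf_and q q_uf _ _ Hs (q_phi s)).
    intros t [[v [Hv Bv]] Hst]. unfold phi in Hst.
    destruct (opS s t) as [u|] eqn:Hu; [|congruence].
    exists u. split; [exact Hu|]. rewrite (hom _ _ _ Hu) in Hv. congruence.
Qed.

(* For an ideal I of delta T, {r' in delta S : h~ r' in I} is an ideal of delta S. *)
Lemma ext_K_delta r : deltaS opS r -> in_K_delta opS r -> in_K_delta opT (ext h r).
Proof.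
  intros r_delta r_K I [[q Iq] [I_delta [I_ext I_mul]]].
  apply (r_K (fun r' => deltaS opS r' /\ I (ext h r'))).
  split; [|split; [|split]].
  - destruct (ext_onto q (I_delta q Iq)) as [r' [r'_delta Hr']].
    exists r'. split; [exact r'_delta|]. rewrite (pred_ext _ _ Hr'). exact Iq.
  - intros r' [r'_delta _]. exact r'_delta.
  - intros r1 r2 Hr1 Hr12. rewrite <- (pred_ext _ _ Hr12). exact Hr1.
  - intros r1 q1 [r1_delta Ir1] q1_delta.
    destruct (I_mul _ _ Ir1 (ext_deltaS q1 q1_delta)) as [Ir1q1 Iq1r1].
    split; split.
    + exact (ufmul_deltaS opS assocS r1 q1 r1_delta q1_delta).
    + rewrite ext_ufmul by exact q1_delta. exact Ir1q1.
    + exact (ufmul_deltaS opS assocS q1 r1 q1_delta r1_delta).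
    + rewrite ext_ufmul by exact r1_delta. exact Iq1r1.
Qed.

Lemma preimage_not_central (A : T -> Prop) :
  ~ central opT A -> ~ central opS (fun s => A (h s)).
Proof.
  intros nA [r [r_delta [r_K [r_idem rA]]]]. apply nA.
  exists (ext h r). split; [exact (ext_deltaS r r_delta)|].
  split; [exact (ext_K_delta r r_delta r_K)|]. split; [|exact rA].
  unfold idempotent. rewrite <- ext_ufmul by exact r_delta.
  intro B. exact (r_idem (fun s => B (h s))).
Qed.

End Image.

Theorem corollary5p8 (S T : Type) (opS : S -> S -> option S)
  (opT : T -> T -> option T) (h : S -> T) (A : T -> Prop)
  (p : (T -> Prop) -> Prop) :
  psg_assoc opS -> psg_comm opS -> psg_adequate opS ->
  psg_assoc opT -> psg_comm opT -> psg_adequate opT ->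
  psg_hom opS opT h ->
  (forall t, exists s, h s = t) ->
  (forall r, deltaS opS r -> deltaS opT (ext h r)) ->
  (forall q, deltaS opT q -> exists r, deltaS opS r /\ ufeq (ext h r) q) ->
  ~ central opT A ->
  deltaS opT p -> idempotent opT p -> p A ->
  (exists r, in_Jdelta opS r /\ ufeq p (ext h r)) ->
  C_set opS (fun s => A (h s)) /\ ~ central opS (fun s => A (h s)).
Proof.
  intros assocS _ _ assocT _ _ hom _ ext_deltaS ext_onto nA p_delta p_idem pA [r [r_J p_r]].
  split.
  - exact (preimage_C_set opS opT h p A r assocS assocT hom (proj1 p_delta) p_idem pA r_J p_r).
  - exact (preimage_not_central opS opT h assocS hom ext_deltaS ext_onto A nA).
Qed.
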